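(* Fix an agent $k$ and a neighbor $\ell$ that are paired at time $i$. Let $\delta_k\in(0,1)$, $r_k\in(0,1)$, $c_k>0$, $\theta_{k\ell}(i)\in[0,1]$, $\theta_{\ell k}(i)\in(0,1]$, and let $A_0,A_1$ be real numbers; set $b_k(i)\triangleq A_0-A_1$ and $\gamma_k(i)\triangleq b_k(i)/c_k$. For each candidate action $a\in\{0,1\}$ of agent $k$ at time $i$, define agent $k$'s forecast of its own future reputation by $\theta^a(i)=\theta_{k\ell}(i)$ and $\theta^a(t+1)=r_k\theta^a(t)+(1-r_k)a$ for $t\ge i$ (i.e., agent $k$ is forecast to repeat action $a$ at all future times $t\ge i$), and define the long-term discounted cost $$J(a)\triangleq\sum_{t=i}^{\infty}\delta_k^{t-i}\Big[\big(1-\theta^a(t)\theta_{\ell k}(i)\big)A_0+\theta^a(t)\theta_{\ell k}(i)A_1+a\,c_k\Big].$$ Agent $k$'s best response is $a_{k\ell}(i)=1$ if $J(1)<J(0)$ and $a_{k\ell}(i)=0$ otherwise. Then $$a_{k\ell}(i)=\begin{cases}1,&\text{if }\gamma_k(i)=\dfrac{b_k(i)}{c_k}>\dfrac{\chi_k}{\theta_{\ell k}(i)},\\[2mm]0,&\text{otherwise,}\end{cases}\qquad\text{where }\chi_k\triangleq\frac{1-\delta_k r_k}{\delta_k(1-r_k)}.$$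
   Context: Setting: agents estimate a common vector; at time $i$ paired agents $k,\ell$ each decide whether to share ($a=1$, costing the sharer $c_k>0$) or not ($a=0$). $A_0$ (resp. $A_1$) is agent $k$'s expected next-step mean-square estimation cost, conditioned on its current estimate, when agent $\ell$ does not share (resp. shares) its intermediate estimate; $b_k(i)=A_0-A_1$ is the benefit to $k$ of $\ell$'s sharing. Reputation scores $\theta_{\ell k}$ (kept by $k$ about $\ell$) and $\theta_{k\ell}$ (kept by $\ell$ about $k$) are updated when paired by $\theta\leftarrow r\theta+(1-r)\cdot(\text{action})$. Agent $k$ believes that $\ell$ shares at time $t$ with probability $B(a_{\ell k}(t)=1)=\theta_{k\ell}(t)\theta_{\ell k}(t)$. Bounded rationality (the paper's Assumptions 1 and 2): when choosing its action at time $i$, agent $k$ assumes that its estimate, the pairing with $\ell$, and the score $\theta_{\ell k}$ remain at their time-$i$ values for all $t\ge i$, and that both agents repeat their time-$i$ actions in the future; the cost $J(a)$ above is the resulting expected long-term discounted cost $\sum_{t\ge i}\delta_k^{t-i}\mathbb{E}[J^{\rm act}_k(a_{\ell k}(t))+a_{k\ell}(t)c_k]$, with the expectation over $a_{\ell k}(t)$ taken under the belief. *)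

From Stdlib Require Import Reals.
From Coquelicot Require Import Coquelicot.
Open Scope R_scope.

Definition act (a : bool) : R := if a then 1 else 0.

(* Forecast of agent k's own reputation, indexed by n = t - i:
   theta^a(i) = th0, theta^a(t+1) = r theta^a(t) + (1-r) a. *)
Fixpoint theta_fc (r th0 : R) (a : bool) (n : nat) : R :=
  match n with
  | O => th0
  | S m => r * theta_fc r th0 a m + (1 - r) * act a
  end.

(* Long-term discounted cost J(a), summation index n = t - i. *)
Definition Jcost (delta r c th_kl th_lk A0 A1 : R) (a : bool) : R :=
  Series (fun n => delta ^ n *
    ((1 - theta_fc r th_kl a n * th_lk) * A0
     + theta_fc r th_kl a n * th_lk * A1 + act a * c)).

Definition best_response (delta r c th_kl th_lk A0 A1 : R) : bool :=
  if Rlt_dec (Jcost delta r c th_kl th_lk A0 A1 true)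
             (Jcost delta r c th_kl th_lk A0 A1 false)
  then true else false.

Definition chi (delta r : R) : R := (1 - delta * r) / (delta * (1 - r)).

(* Under the forecast, agent k's reputation relaxes geometrically towards the
   repeated action a: theta^a(i + n) = a + r^n (theta_kl - a).  Hence J(a) is a
   combination of the two geometric series with ratios delta and delta r, and
   (1 - delta)(1 - delta r) (J(1) - J(0)) = c (1 - delta r) - theta_lk b delta (1 - r).
   Sharing is the best response exactly when this quantity is negative, which,
   after dividing by the positive number c delta (1 - r) theta_lk, is the
   threshold condition gamma > chi / theta_lk. *)

From Stdlib Require Import Reals Lra.
From Coquelicot Require Import Coquelicot.
Open Scope R_scope.

Lemma theta_fc_closed r th a n :
  theta_fc r th a n = act a + r ^ n * (th - act a).
Proof. induction n as [|n IHn]; simpl; [ring | rewrite IHn; ring]. Qed.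

Lemma is_series_geom_comb (p q d s : R) :
  Rabs d < 1 -> Rabs s < 1 ->
  is_series (fun n => p * d ^ n + q * s ^ n) (p / (1 - d) + q / (1 - s)).
Proof.
  intros Hd Hs; unfold Rdiv.
  apply (is_series_plus (fun n => p * d ^ n) (fun n => q * s ^ n)).
  - apply (is_series_scal p (fun n => d ^ n)); now apply is_series_geom.
  - apply (is_series_scal q (fun n => s ^ n)); now apply is_series_geom.
Qed.

Lemma Jcost_closed delta r c th_kl th_lk A0 A1 a :
  0 <= delta < 1 -> 0 <= r < 1 ->
  Jcost delta r c th_kl th_lk A0 A1 a =
    (A0 + act a * (c - th_lk * (A0 - A1))) / (1 - delta)
    + th_lk * (A0 - A1) * (act a - th_kl) / (1 - delta * r).
Proof.
  intros Hd Hr.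
  assert (Hdr : 0 <= delta * r < 1) by (split; nra).
  unfold Jcost; apply is_series_unique.
  eapply is_series_ext;
    [| apply is_series_geom_comb; rewrite Rabs_pos_eq; lra].
  intro n; simpl; rewrite theta_fc_closed, Rpow_mult_distr; ring.
Qed.

Lemma Rdiv_neg_iff x y : 0 < y -> x / y < 0 <-> x < 0.
Proof.
  intro Hy; split; intro H.
  - apply Rmult_lt_reg_r with (/ y); [now apply Rinv_0_lt_compat | lra].
  - now apply Rdiv_neg_pos.
Qed.

Lemma Rlt_dec_bool_iff x y u v :
  (x < y <-> u < v) ->
  (if Rlt_dec x y then true else false) = (if Rlt_dec u v then true else false).
Proof.
  intro E; destruct (Rlt_dec x y), (Rlt_dec u v); tauto.
Qed.

Definition sharing_margin (delta r c th_lk b : R) : R :=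
  c * (1 - delta * r) - th_lk * b * delta * (1 - r).

Lemma Jcost_diff_margin delta r c th_kl th_lk A0 b :
  0 < delta < 1 -> 0 < r < 1 ->
  Jcost delta r c th_kl th_lk A0 (A0 - b) true
  - Jcost delta r c th_kl th_lk A0 (A0 - b) false
  = sharing_margin delta r c th_lk b / ((1 - delta) * (1 - delta * r)).
Proof.
  intros Hdelta Hr.
  rewrite !Jcost_closed by lra.
  replace (A0 - (A0 - b)) with b by ring.
  unfold sharing_margin, act; field; nra.
Qed.

Lemma chi_threshold_margin delta r c th_lk b :
  0 < delta < 1 -> 0 < r < 1 -> 0 < c -> 0 < th_lk ->
  chi delta r / th_lk - b / c =
    sharing_margin delta r c th_lk b / (c * (delta * (1 - r) * th_lk)).
Proof. intros Hdelta Hr Hc Hth; unfold chi, sharing_margin; field; nra. Qed.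

Theorem lemma1 (delta r c th_kl th_lk A0 A1 : R) :
  0 < delta < 1 -> 0 < r < 1 -> 0 < c ->
  0 <= th_kl <= 1 -> 0 < th_lk <= 1 ->
  best_response delta r c th_kl th_lk A0 A1 =
    (if Rlt_dec (chi delta r / th_lk) ((A0 - A1) / c) then true else false).
Proof.
  intros Hdelta Hr Hc _ [Hth _].
  assert (Hcost_den : 0 < (1 - delta) * (1 - delta * r)).
  { apply Rmult_lt_0_compat; nra. }
  assert (Hchi_den : 0 < c * (delta * (1 - r) * th_lk)).
  { repeat apply Rmult_lt_0_compat; lra. }
  unfold best_response; apply Rlt_dec_bool_iff.
  replace A1 with (A0 - (A0 - A1)) at 1 2 by ring.
  rewrite <- Rlt_minus_0, Jcost_diff_margin, Rdiv_neg_iff by assumption.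
  rewrite <- (Rlt_minus_0 (chi delta r / th_lk)), chi_threshold_margin,
    Rdiv_neg_iff by assumption.
  reflexivity.
Qed.
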